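(* Let $m\ge1$, let $\mathcal{X},\mathcal{A}_1,\dots,\mathcal{A}_m$ be finite sets with $|\mathcal{X}|=d\ge2$, and let $P$ be a probability distribution on $\mathcal{X}\times\mathcal{A}_1\times\cdots\times\mathcal{A}_m$. Let $Q$ be an $m$-partite no-signalling correlation with outputs in $\mathcal{X}^m$ and inputs in $\mathcal{A}_1\times\cdots\times\mathcal{A}_m$ such that $Q(x,\dots,x|a_1,\dots,a_m)\le 1/d$ for all $x\in\mathcal{X}$ and all $a_i\in\mathcal{A}_i$. Then $$\sum_{x,a_1,\dots,a_m}P(x,a_1,\dots,a_m)Q(x,\dots,x|a_1,\dots,a_m)\le\omega_{\mathrm{c}},$$ where $\omega_{\mathrm{c}}=\max_{f_1,\dots,f_m}\sum_{x,a_1,\dots,a_m}P(x,a_1,\dots,a_m)\,\delta[f_1(a_1)=\cdots=f_m(a_m)=x]$ over functions $f_i\colon\mathcal{A}_i\to\mathcal{X}$.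
   Context: $\delta$ is the indicator function. An $m$-partite no-signalling correlation is a conditional distribution $Q(x_1,\dots,x_m|a_1,\dots,a_m)$ on $\mathcal{X}^m$ given $(a_1,\dots,a_m)$ such that for every index set $I\subset\{1,\dots,m\}$ with complement $J$, $\sum_{x_J}Q(x_I,x_J|a_I,a_J)$ does not depend on $a_J$ (for all fixed $x_I,a_I$). *)

From HB Require Import structures.
From mathcomp Require Import all_boot all_order all_algebra.
Set Implicit Arguments. Unset Strict Implicit. Unset Printing Implicit Defensive.
Import Order.TTheory GRing.Theory Num.Theory.
Local Open Scope ring_scope.

Definition inputs (m : nat) (A : 'I_m -> finType) := {dffun forall i : 'I_m, A i}.
Definition outputs (m : nat) (X : finType) := {ffun 'I_m -> X}.

Definition is_cond_distr (R : realFieldType) (m : nat) (X : finType)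
  (A : 'I_m -> finType) (Q : inputs A -> outputs m X -> R) : Prop :=
  (forall a x, 0 <= Q a x) /\ (forall a, \sum_(x : outputs m X) Q a x = 1).

Definition no_signalling (R : realFieldType) (m : nat) (X : finType)
  (A : 'I_m -> finType) (Q : inputs A -> outputs m X -> R) : Prop :=
  forall (I : {set 'I_m}) (a a' : inputs A) (xI : outputs m X),
    (forall i, i \in I -> a i = a' i) ->
    \sum_(x : outputs m X | [forall i in I, x i == xI i]) Q a x =
    \sum_(x : outputs m X | [forall i in I, x i == xI i]) Q a' x.

Definition is_distr (R : realFieldType) (T : finType) (P : T -> R) : Prop :=
  (forall t, 0 <= P t) /\ \sum_t P t = 1.

Definition classical_value (R : realFieldType) (m : nat) (X : finType)
  (A : 'I_m -> finType) (P : X * inputs A -> R)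
  (f : {dffun forall i : 'I_m, {ffun A i -> X}}) : R :=
  \sum_(x : X) \sum_(a : inputs A)
     P (x, a) * ([forall i, f i (a i) == x] : bool)%:R.

(* omega_c = max over classical strategies (all values are >= 0 for a
   probability distribution P, so folding Num.max from 0 gives the max). *)
Definition omega_c (R : realFieldType) (m : nat) (X : finType)
  (A : 'I_m -> finType) (P : X * inputs A -> R) : R :=
  \big[Num.max/0]_(f : {dffun forall i : 'I_m, {ffun A i -> X}})
     classical_value P f.

(* The bound Q(x,...,x|a) <= 1/d alone caps the value of Q at 1/d, since
   P has total mass 1.  Conversely, the constant
   strategies f_i = x win with probability sum_a P(x,a), and these d numbers
   sum to 1, so the best of them is at least 1/d. *)

From HB Require Import structures.
From mathcomp Require Import all_boot all_order all_algebra.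
Set Implicit Arguments. Unset Strict Implicit. Unset Printing Implicit Defensive.
Import Order.TTheory GRing.Theory Num.Theory.
Local Open Scope ring_scope.

Lemma distr_weighted_sum_le (R : realFieldType) (T : finType) (w F : T -> R)
    (c : R) :
  is_distr w -> (forall t, F t <= c) -> \sum_t w t * F t <= c.
Proof.
move=> [w_ge0 w_sum1] F_le_c.
rewrite -[leRHS]mul1r -w_sum1 mulr_suml.
by apply: ler_sum => t _; rewrite ler_wpM2l.
Qed.

Section ClassicalValue.

Variables (R : realFieldType) (m : nat) (X : finType) (A : 'I_m -> finType).
Variable P : X * inputs A -> R.

Definition const_strategy (x : X) : {dffun forall i : 'I_m, {ffun A i -> X}} :=
  [ffun i => [ffun _ => x]].

Lemma classical_value_const (x : X) :
  (0 < m)%N -> classical_value P (const_strategy x) = \sum_a P (x, a).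
Proof.
move=> m_gt0; rewrite /classical_value (bigD1 x) //= [X in _ + X]big1 ?addr0.
  apply: eq_bigr => a _.
  suff -> : [forall i, const_strategy x i (a i) == x] by rewrite mulr1.
  by apply/forallP => i; rewrite !ffunE.
move=> y /negbTE y_neq_x; apply: big1 => a _.
suff /negbTE -> : ~~ [forall i, const_strategy x i (a i) == y] by rewrite mulr0.
by apply/forallPn; exists (Ordinal m_gt0); rewrite !ffunE eq_sym y_neq_x.
Qed.

Lemma inv_card_le_omega_c :
  (0 < m)%N -> (0 < #|X|)%N -> \sum_t P t = 1 -> 1 / #|X|%:R <= omega_c P.
Proof.
move=> m_gt0 X_gt0 P_sum1.
have const_values_sum1 : \sum_x classical_value P (const_strategy x) = 1.
  under eq_bigr do rewrite classical_value_const //.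
  by rewrite pair_big -P_sum1; apply: eq_bigr => -[].
rewrite ler_pdivrMr ?ltr0n // -sum1_card natr_sum mulr_sumr.
rewrite -[leLHS]const_values_sum1.
by apply: ler_sum => x _; rewrite mulr1 le_bigmax.
Qed.

End ClassicalValue.

Theorem mainTheorem9 (R : realFieldType) (m : nat) (X : finType)
  (A : 'I_m -> finType)
  (P : X * inputs A -> R) (Q : inputs A -> outputs m X -> R) :
  (0 < m)%N ->
  (2 <= #|X|)%N ->
  is_distr P ->
  is_cond_distr Q ->
  no_signalling Q ->
  (forall (x : X) (a : inputs A), Q a [ffun _ => x] <= 1 / (#|X|%:R)) ->
  \sum_(x : X) \sum_(a : inputs A) P (x, a) * Q a [ffun _ => x]
    <= omega_c P.
Proof.
move=> m_gt0 X_ge2 P_distr _ _ Q_diag_le.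
have X_gt0 : (0 < #|X|)%N by apply: leq_trans X_ge2.
apply: le_trans (inv_card_le_omega_c m_gt0 X_gt0 P_distr.2).
rewrite pair_big (eq_bigr (fun t => P t * Q t.2 [ffun _ => t.1])) => [|[] //].
by apply: distr_weighted_sum_le => // -[].
Qed.
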